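(* Let $(s,\xi)$ be a Nash equilibrium of the coordination mechanism described in the context in a game with unit activation costs. Then for every job $j$, either $\xi_j=0$ or every slot in $[r_j,d_j)\setminus\{s_j\}$ is unoccupied (has no job assigned to it under $s$).
   Context: Unit activation costs means $c(0)=0$ and $c(l)=1$ for every integer $l>0$. A game consists of the cost function $c$, slots $t=1,\dots,T$, and a set of jobs, each job $j$ having integer release time $r_j$ and deadline $d_j$ with $0<r_j<d_j<T$. In the coordination mechanism, each job $j$ chooses a pair $(s_j,\xi_j)$ with $s_j$ an integer in $[r_j,d_j)$ and payment $\xi_j\ge0$. The load of slot $t$ is $l_t(s)=|\{j:s_j=t\}|$. Slot $t$ is opened iff $\sum_{j:s_j=t}\xi_j\ge c(l_t(s))$; a job whose slot is not opened has infinite cost, otherwise its cost is $\xi_j$. A profile $(s,\xi)$ is a Nash equilibrium if for every job $j$: (i) $\sum_{j':s_{j'}=s_j}\xi_{j'}\ge c(l_{s_j}(s))$; (ii) for every $t\in[r_j,d_j)\setminus\{s_j\}$, $\xi_j\le\max\{0,\,c(l_t(s)+1)-\sum_{j':s_{j'}=t}\xi_{j'}\}$; (iii) $\xi_j\le\max\{0,\,c(l_{s_j}(s))-\sum_{j':s_{j'}=s_j,\,j'\ne j}\xi_{j'}\}$. *)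

From mathcomp Require Import all_boot all_order all_algebra.
Set Implicit Arguments. Unset Strict Implicit. Unset Printing Implicit Defensive.
Import Order.TTheory GRing.Theory Num.Theory.
Local Open Scope ring_scope.

(* Jobs are indexed by a finite type J; slots are natural numbers.
   r j, d j : release time and deadline; s j : chosen slot; xi j : payment. *)

Definition unit_cost (R : realFieldType) (l : nat) : R := if l == 0%N then 0 else 1.

Definition load (J : finType) (s : J -> nat) (t : nat) : nat := #|[set j | s j == t]|.

Definition pay (R : realFieldType) (J : finType) (s : J -> nat) (xi : J -> R) (t : nat) : R :=
  \sum_(j | s j == t) xi j.

Definition pay_others (R : realFieldType) (J : finType) (s : J -> nat) (xi : J -> R)
  (t : nat) (j : J) : R :=
  \sum_(j' | (s j' == t) && (j' != j)) xi j'.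

Definition valid_game (J : finType) (T : nat) (r d : J -> nat) : Prop :=
  forall j, (0 < r j)%N /\ (r j < d j)%N /\ (d j < T)%N.

Definition valid_profile (R : realFieldType) (J : finType) (r d : J -> nat)
  (s : J -> nat) (xi : J -> R) : Prop :=
  forall j, (r j <= s j)%N /\ (s j < d j)%N /\ 0 <= xi j.

Definition nash_eq (R : realFieldType) (c : nat -> R) (J : finType) (r d : J -> nat)
  (s : J -> nat) (xi : J -> R) : Prop :=
  forall j,
    [/\ pay s xi (s j) >= c (load s (s j)),
        (forall t, (r j <= t)%N -> (t < d j)%N -> t != s j ->
           xi j <= Num.max 0 (c (load s t).+1 - pay s xi t))
      & xi j <= Num.max 0 (c (load s (s j)) - pay_others s xi (s j) j)].

From mathcomp Require Import all_boot all_order all_algebra.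
Import Order.TTheory GRing.Theory Num.Theory.
Set Implicit Arguments. Unset Strict Implicit. Unset Printing Implicit Defensive.
Local Open Scope ring_scope.

(* A job paying xi_j > 0 could move for free to any occupied slot t: the jobs
   already at t pay at least c(l_t) = 1 = c(l_t + 1), so t stays open with
   the mover paying 0.  The equilibrium condition (ii) then forces xi_j <= 0. *)

Section Equilibrium.

Variables (R : realFieldType) (J : finType).
Implicit Types (c : nat -> R) (r d s : J -> nat) (xi : J -> R).

Lemma load_eq0P s t : reflect (forall k, s k != t) (load s t == 0%N).
Proof.
rewrite /load cards_eq0; apply: (iffP eqP) => [s0 k | nos].
  by apply: contra_eqN s0 => /eqP skt; apply/set0Pn; exists k; rewrite inE skt.
by apply/setP => k; rewrite !inE (negbTE (nos k)).
Qed.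

Lemma nash_eq_cost_le_pay c r d s xi k :
  nash_eq c r d s xi -> c (load s (s k)) <= pay s xi (s k).
Proof. by move=> /(_ k) []. Qed.

Lemma nash_eq_le0_free_deviation c r d s xi j t :
  nash_eq c r d s xi -> (r j <= t)%N -> (t < d j)%N -> t != s j ->
  c (load s t).+1 <= pay s xi t -> xi j <= 0.
Proof.
move=> /(_ j) [_ dev _] rt td ts free.
by have := dev t rt td ts; rewrite (max_idPl _) // subr_le0.
Qed.

End Equilibrium.

Lemma unit_costS (R : realFieldType) l :
  (0 < l)%N -> unit_cost R l.+1 = unit_cost R l.
Proof. by rewrite /unit_cost lt0n => /negbTE ->. Qed.

Theorem lemma5 (R : realFieldType) (J : finType) (T : nat) (r d : J -> nat)
  (s : J -> nat) (xi : J -> R) :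
  valid_game T r d ->
  valid_profile r d s xi ->
  nash_eq (@unit_cost R) r d s xi ->
  forall j : J,
    xi j = 0 \/
    (forall t : nat, (r j <= t)%N -> (t < d j)%N -> t != s j -> load s t = 0%N).
Proof.
move=> _ prof nash j; have [_ [_ xi_ge0]] := prof j.
have [->|xi_neq0] := eqVneq (xi j) 0; [by left | right].
move=> t rt td ts; apply/eqP/load_eq0P => k; apply: contra_neqN xi_neq0 => /eqP skt.
have occupied : (0 < load s t)%N.
  by rewrite lt0n; apply/load_eq0P => /(_ k); rewrite skt eqxx.
have free : unit_cost R (load s t).+1 <= pay s xi t.
  by rewrite unit_costS // -skt (nash_eq_cost_le_pay k nash).
by apply/eqP; rewrite eq_le xi_ge0 (nash_eq_le0_free_deviation nash rt td ts free).
Qed.
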